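(* For every $n\ge 1$ and every $i\in\{1,\dots,n-1\}$, $\mathrm{cap}_{\{i\},n}\circ\mathrm{j}_n=0=\mathrm{j}_n\circ\mathrm{cup}_{\{i\},n}$ in $\mathcal{TL}_0(\Bbbk)$. Equivalently, $\mathrm{j}_n$ is annihilated under both pre- and post-composition by the ideal spanned by Temperley–Lieb diagrams with fewer than $n$ through-strands.
   Context: $\Bbbk$ is a field. $\mathcal{TL}_0(\Bbbk)$ is the strict $\Bbbk$-linear monoidal category with objects $\mathbf 0,\mathbf 1,\dots$, $\mathbf m\otimes\mathbf n=\mathbf{m+n}$, generated by $\mathrm{cup}:\mathbf 0\to\mathbf 2$ and $\mathrm{cap}:\mathbf 2\to\mathbf 0$ subject to $(\mathrm{id}_{\mathbf 1}\otimes\mathrm{cap})\circ(\mathrm{cup}\otimes\mathrm{id}_{\mathbf 1})=0=(\mathrm{cap}\otimes\mathrm{id}_{\mathbf 1})\circ(\mathrm{id}_{\mathbf 1}\otimes\mathrm{cup})$ and $\mathrm{cap}\circ\mathrm{cup}=\mathrm{id}_{\mathbf 0}$. A Temperley–Lieb diagram is a nonzero morphism built from cup, cap and identities by $\otimes$ and $\circ$; its through-strands are the strands joining bottom to top. A subset $I\subseteq\{1,\dots,n\}$ is apt if $n\notin I$ and no two elements of $I$ are consecutive; $\mathrm{cap}_{I,n}:\mathbf n\to\mathbf{n-2|I|}$ has caps joining strands $i,i+1$ for $i\in I$ and through-strands elsewhere, $\mathrm{cup}_{I,n}$ is its vertical reflection (so $\mathrm{cap}_{\{i\},n}=\mathrm{id}_{\mathbf{i-1}}\otimes\mathrm{cap}\otimes\mathrm{id}_{\mathbf{n-i-1}}$,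 $\mathrm{cup}_{\{i\},n}=\mathrm{id}_{\mathbf{i-1}}\otimes\mathrm{cup}\otimes\mathrm{id}_{\mathbf{n-i-1}}$), and $\mathrm{j}_n=\sum_{I\text{ apt}}(-1)^{|I|}\mathrm{cup}_{I,n}\circ\mathrm{cap}_{I,n}$. *)

(* The Temperley-Lieb category TL_0(k) is presented
   syntactically: morphisms are (equivalence classes of) well-typed formal
   expressions built from id, cup, cap, composition, tensor product and
   k-linear combinations, modulo the congruence generated by the axioms of a
   strict k-linear monoidal category together with the defining relations
   of TL_0. *)
From HB Require Import structures.
From mathcomp Require Import all_boot all_algebra.
Set Implicit Arguments.
Unset Strict Implicit.
Unset Printing Implicit Defensive.
Import GRing.Theory.
Local Open Scope ring_scope.

Section TL0.
Variable K : fieldType.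

Inductive tm : Type :=
  | Id (n : nat)
  | Cup
  | Cap
  | Comp (f g : tm)
  | Tens (f g : tm)
  | Zero (m n : nat)
  | Add (f g : tm)
  | Scale (c : K) (f : tm).

Inductive wt : tm -> nat -> nat -> Prop :=
  | wt_id n : wt (Id n) n n
  | wt_cup : wt Cup 0 2
  | wt_cap : wt Cap 2 0
  | wt_comp f g a b c : wt g a b -> wt f b c -> wt (Comp f g) a c
  | wt_tens f g a b a' b' : wt f a b -> wt g a' b' -> wt (Tens f g) (a + a') (b + b')
  | wt_zero m n : wt (Zero m n) m n
  | wt_add f g m n : wt f m n -> wt g m n -> wt (Add f g) m n
  | wt_scale c f m n : wt f m n -> wt (Scale c f) m n.

Inductive eqv : tm -> tm -> Prop :=
  | eqv_refl f : eqv f f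
  | eqv_sym f g : eqv f g -> eqv g f
  | eqv_trans f g h : eqv f g -> eqv g h -> eqv f h
  | eqv_comp f f' g g' : eqv f f' -> eqv g g' -> eqv (Comp f g) (Comp f' g')
  | eqv_tens f f' g g' : eqv f f' -> eqv g g' -> eqv (Tens f g) (Tens f' g')
  | eqv_add f f' g g' : eqv f f' -> eqv g g' -> eqv (Add f g) (Add f' g')
  | eqv_scale c f f' : eqv f f' -> eqv (Scale c f) (Scale c f')
  | eqv_id_l f m n : wt f m n -> eqv (Comp (Id n) f) f
  | eqv_id_r f m n : wt f m n -> eqv (Comp f (Id m)) f
  | eqv_comp_assoc f g h a b c d : wt h a b -> wt g b c -> wt f c d ->
      eqv (Comp (Comp f g) h) (Comp f (Comp g h))
  | eqv_tens_id m n : eqv (Tens (Id m) (Id n)) (Id (m + n))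
  | eqv_tens_unit_l f m n : wt f m n -> eqv (Tens (Id 0) f) f
  | eqv_tens_unit_r f m n : wt f m n -> eqv (Tens f (Id 0)) f
  | eqv_tens_assoc f g h a b a' b' a'' b'' :
      wt f a b -> wt g a' b' -> wt h a'' b'' ->
      eqv (Tens (Tens f g) h) (Tens f (Tens g h))
  | eqv_interchange f f' g g' a b c a' b' c' :
      wt f' a b -> wt f b c -> wt g' a' b' -> wt g b' c' ->
      eqv (Comp (Tens f g) (Tens f' g')) (Tens (Comp f f') (Comp g g'))
  | eqv_add_assoc f g h m n : wt f m n -> wt g m n -> wt h m n ->
      eqv (Add (Add f g) h) (Add f (Add g h))
  | eqv_add_comm f g m n : wt f m n -> wt g m n -> eqv (Add f g) (Add g f)
  | eqv_add_zero f m n : wt f m n -> eqv (Add f (Zero m n)) f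
  | eqv_add_opp f m n : wt f m n -> eqv (Add f (Scale (-1) f)) (Zero m n)
  | eqv_scale_scale a b f m n : wt f m n ->
      eqv (Scale a (Scale b f)) (Scale (a * b) f)
  | eqv_scale_one f m n : wt f m n -> eqv (Scale 1 f) f
  | eqv_scale_addr a f g m n : wt f m n -> wt g m n ->
      eqv (Scale a (Add f g)) (Add (Scale a f) (Scale a g))
  | eqv_scale_addl a b f m n : wt f m n ->
      eqv (Scale (a + b) f) (Add (Scale a f) (Scale b f))
  | eqv_comp_addl f g h a b c : wt h a b -> wt f b c -> wt g b c ->
      eqv (Comp (Add f g) h) (Add (Comp f h) (Comp g h))
  | eqv_comp_addr f g h a b c : wt g a b -> wt h a b -> wt f b c ->
      eqv (Comp f (Add g h)) (Add (Comp f g) (Comp f h))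
  | eqv_comp_scalel c f g a b d : wt g a b -> wt f b d ->
      eqv (Comp (Scale c f) g) (Scale c (Comp f g))
  | eqv_comp_scaler c f g a b d : wt g a b -> wt f b d ->
      eqv (Comp f (Scale c g)) (Scale c (Comp f g))
  | eqv_tens_addl f g h a b a' b' : wt f a b -> wt g a b -> wt h a' b' ->
      eqv (Tens (Add f g) h) (Add (Tens f h) (Tens g h))
  | eqv_tens_addr f g h a b a' b' : wt f a b -> wt g a' b' -> wt h a' b' ->
      eqv (Tens f (Add g h)) (Add (Tens f g) (Tens f h))
  | eqv_tens_scalel c f g a b a' b' : wt f a b -> wt g a' b' ->
      eqv (Tens (Scale c f) g) (Scale c (Tens f g))
  | eqv_tens_scaler c f g a b a' b' : wt f a b -> wt g a' b' ->
      eqv (Tens f (Scale c g)) (Scale c (Tens f g))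
  | eqv_zigzag1 :
      eqv (Comp (Tens (Id 1) Cap) (Tens Cup (Id 1))) (Zero 1 1)
  | eqv_zigzag2 :
      eqv (Comp (Tens Cap (Id 1)) (Tens (Id 1) Cup)) (Zero 1 1)
  | eqv_loop : eqv (Comp Cap Cup) (Id 0).

(* Diagram with caps (resp. cups, if [g] = Cup) joining strands k+1,k+2 for
   each k with [P k] (0-based positions), scanning [len] strands from
   position [k]; through-strands elsewhere. *)
Fixpoint gens_from (g : tm) (P : nat -> bool) (k len : nat) {struct len} : tm :=
  match len with
  | 0 => Id 0
  | S l =>
      if P k then
        match l with
        | 0 => Id 1 (* never reached for apt subsets *)
        | S l' => Tens g (gens_from g P (k + 2) l')
        end
      else Tens (Id 1) (gens_from g P (k + 1) l)
  end.

(* Subsets I of {1,...,n} are encoded as I : {set 'I_n}, the ordinal k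
   standing for strand k+1. *)
Definition inI n (I : {set 'I_n}) (k : nat) : bool :=
  [exists i in I, nat_of_ord i == k].

(* apt: n \notin I and no two elements of I are consecutive. *)
Definition apt n (I : {set 'I_n}) : bool :=
  [forall i : 'I_n, (i \in I) ==> (i.+1 < n)%N] &&
  [forall i : 'I_n, forall j : 'I_n,
     ((i \in I) && (j \in I)) ==> (nat_of_ord j != i.+1)].

Definition capI n (I : {set 'I_n}) : tm := gens_from Cap (inI I) 0 n.
Definition cupI n (I : {set 'I_n}) : tm := gens_from Cup (inI I) 0 n.

Definition jn (n : nat) : tm :=
  foldr (fun (I : {set 'I_n}) acc => Add (Scale ((-1) ^+ #|I|) (Comp (cupI I) (capI I))) acc)
        (Zero n n) (enum [pred I : {set 'I_n} | apt I]).

Definition cap1 (n i : nat) : tm := Tens (Tens (Id (i - 1)) Cap) (Id (n - i - 1)).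
Definition cup1 (n i : nat) : tm := Tens (Tens (Id (i - 1)) Cup) (Id (n - i - 1)).

End TL0.

From Pilot Require Import Defs.
From mathcomp Require Import all_boot all_algebra zify.
From Stdlib Require Import Setoid Morphisms.
Set Implicit Arguments. Unset Strict Implicit. Unset Printing Implicit Defensive.
Import GRing.Theory.

(* j_n obeys the three-term recursion
     j_(n+2) = id_1 (x) j_(n+1) - (cup o cap) (x) j_n,   j_0 = id_0,  j_1 = id_1,
   obtained by splitting the apt sets according to whether 1 is in I.  Any
   family obeying this recursion is killed by a cap on strands k+1, k+2.  For
   k = 0 expand the recursion twice: the loop relation makes the two leading
   terms cancel and the remaining term contains the zigzag
   (cap (x) id_1) o (id_1 (x) cup) = 0.  For k = 1 the first term is the case
   k = 0 and the second contains the other zigzag.  For k >= 2 the cap slides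
   past the first one or two strands of both terms, and induction applies.
   The statement for cups follows by vertical reflection, an anti-involution
   of TL_0 that fixes j_n. *)

Instance eqv_equivalence (K : fieldType) : Equivalence (@eqv K).
Proof. split; [exact: eqv_refl | exact: eqv_sym | exact: eqv_trans]. Qed.
Instance Comp_proper (K : fieldType) : Proper (@eqv K ==> @eqv K ==> @eqv K) (@Comp K).
Proof. by move=> ? ? ? ? ? ?; apply: eqv_comp. Qed.
Instance Tens_proper (K : fieldType) : Proper (@eqv K ==> @eqv K ==> @eqv K) (@Tens K).
Proof. by move=> ? ? ? ? ? ?; apply: eqv_tens. Qed.
Instance Add_proper (K : fieldType) : Proper (@eqv K ==> @eqv K ==> @eqv K) (@Add K).
Proof. by move=> ? ? ? ? ? ?; apply: eqv_add. Qed.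
Instance Scale_proper (K : fieldType) c : Proper (@eqv K ==> @eqv K) (@Scale K c).
Proof. by move=> ? ? ?; apply: eqv_scale. Qed.

Section TL0.
Variable K : fieldType.
Local Notation tm := (tm K).
Local Notation eqv := (@eqv K).
Local Notation wt := (@wt K).
Local Notation Id := (Defs.Id K).
Local Notation Cup := (Defs.Cup K).
Local Notation Cap := (Defs.Cap K).
Local Notation Zero := (Defs.Zero K).
Local Notation U := (Comp Cup Cap).

Hint Resolve eqv_refl : core.

(** * Typing *)

Lemma wt_cast f a b a' b' : wt f a b -> a = a' -> b = b' -> wt f a' b'.
Proof. by move=> H <- <-. Qed.

Lemma wt_comp_cast f g a b b' c : wt g a b -> wt f b' c -> b = b' -> wt (Comp f g) a c.
Proof. by move=> Hg Hf E; subst; exact: wt_comp Hg Hf. Qed.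

Lemma wt_add_cast f g m n m' n' :
  wt f m n -> wt g m' n' -> m' = m -> n' = n -> wt (Add f g) m n.
Proof. by move=> Hf Hg E1 E2; subst; exact: wt_add. Qed.

Create HintDb wt_db.

Ltac wt_infer := lazymatch goal with
  | |- wt (Defs.Id _ _) _ _ => apply: wt_id
  | |- wt (Defs.Cup _) _ _ => apply: wt_cup
  | |- wt (Defs.Cap _) _ _ => apply: wt_cap
  | |- wt (Defs.Zero _ _ _) _ _ => apply: wt_zero
  | |- wt (Comp _ _) _ _ => eapply wt_comp_cast; [wt_infer | wt_infer | ]
  | |- wt (Tens _ _) _ _ => eapply wt_tens; [wt_infer | wt_infer]
  | |- wt (Add _ _) _ _ => eapply wt_add_cast; [wt_infer | wt_infer | | ]
  | |- wt (Scale _ _) _ _ => eapply wt_scale; wt_infer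
  | |- _ => solve [eauto with wt_db]
  end.

Ltac wt_close := eapply wt_cast; [wt_infer | ..]; first [reflexivity | lia].
Ltac wt_auto := repeat eexists; repeat split; wt_close.

Definition typable f := exists a b, wt f a b.

(* The axioms of [eqv] restated with existential typing hypotheses, so that
   after rewriting the side conditions are discharged by [wt_auto]. *)
Lemma comp_idl f n : (exists m, wt f m n) -> eqv (Comp (Id n) f) f.
Proof. by case=> m H; apply: eqv_id_l H. Qed.
Lemma comp_idr f m : (exists n, wt f m n) -> eqv (Comp f (Id m)) f.
Proof. by case=> n H; apply: eqv_id_r H. Qed.
Lemma compA f g h : (exists a b c d, [/\ wt h a b, wt g b c & wt f c d]) ->
  eqv (Comp (Comp f g) h) (Comp f (Comp g h)).
Proof. by case=> a [b [c [d [H1 H2 H3]]]]; apply: eqv_comp_assoc H1 H2 H3. Qed.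
Lemma tensA f g h : typable f -> typable g -> typable h ->
  eqv (Tens (Tens f g) h) (Tens f (Tens g h)).
Proof. by case=> ? [? H1] [? [? H2]] [? [? H3]]; apply: eqv_tens_assoc H1 H2 H3. Qed.
Lemma tens_id m n : eqv (Tens (Id m) (Id n)) (Id (m + n)).
Proof. exact: eqv_tens_id. Qed.
Lemma tens_id0l f : typable f -> eqv (Tens (Id 0) f) f.
Proof. by case=> ? [? H]; apply: eqv_tens_unit_l H. Qed.
Lemma interchange f f' g g' :
  (exists a b c, wt f' a b /\ wt f b c) -> (exists a b c, wt g' a b /\ wt g b c) ->
  eqv (Comp (Tens f g) (Tens f' g')) (Tens (Comp f f') (Comp g g')).
Proof. by case=> ? [? [? [H1 H2]]] [? [? [? [H3 H4]]]]; apply: eqv_interchange H1 H2 H3 H4. Qed.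
Lemma comp_addr f g h : (exists a b c, [/\ wt g a b, wt h a b & wt f b c]) ->
  eqv (Comp f (Add g h)) (Add (Comp f g) (Comp f h)).
Proof. by case=> ? [? [? [H1 H2 H3]]]; apply: eqv_comp_addr H1 H2 H3. Qed.
Lemma comp_scalel c f g : (exists a b d, wt g a b /\ wt f b d) ->
  eqv (Comp (Scale c f) g) (Scale c (Comp f g)).
Proof. by case=> ? [? [? [H1 H2]]]; apply: eqv_comp_scalel H1 H2. Qed.
Lemma comp_scaler c f g : (exists a b d, wt g a b /\ wt f b d) ->
  eqv (Comp f (Scale c g)) (Scale c (Comp f g)).
Proof. by case=> ? [? [? [H1 H2]]]; apply: eqv_comp_scaler H1 H2. Qed.
Lemma tens_addr f g h : typable f -> (exists a b, wt g a b /\ wt h a b) ->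
  eqv (Tens f (Add g h)) (Add (Tens f g) (Tens f h)).
Proof. by case=> ? [? H1] [? [? [H2 H3]]]; apply: eqv_tens_addr H1 H2 H3. Qed.
Lemma tens_scalel c f g : typable f -> typable g -> eqv (Tens (Scale c f) g) (Scale c (Tens f g)).
Proof. by case=> ? [? H1] [? [? H2]]; apply: eqv_tens_scalel H1 H2. Qed.
Lemma tens_scaler c f g : typable f -> typable g -> eqv (Tens f (Scale c g)) (Scale c (Tens f g)).
Proof. by case=> ? [? H1] [? [? H2]]; apply: eqv_tens_scaler H1 H2. Qed.
Lemma scale_scale a b f : typable f -> eqv (Scale a (Scale b f)) (Scale (a * b) f).
Proof. by case=> ? [? H]; apply: eqv_scale_scale H. Qed.
Lemma scale_one f : typable f -> eqv (Scale 1 f) f.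
Proof. by case=> ? [? H]; apply: eqv_scale_one H. Qed.
Lemma scale_addr a f g : (exists m n, wt f m n /\ wt g m n) ->
  eqv (Scale a (Add f g)) (Add (Scale a f) (Scale a g)).
Proof. by case=> ? [? [H1 H2]]; apply: eqv_scale_addr H1 H2. Qed.

Lemma tens_compl a f g : (exists x y z, wt g x y /\ wt f y z) ->
  eqv (Tens (Id a) (Comp f g)) (Comp (Tens (Id a) f) (Tens (Id a) g)).
Proof.
case=> x [y [z [Hg Hf]]].
by rewrite interchange ?comp_idl; try wt_auto.
Qed.

Lemma tens_compr a f g : (exists x y z, wt g x y /\ wt f y z) ->
  eqv (Tens (Comp f g) (Id a)) (Comp (Tens f (Id a)) (Tens g (Id a))).
Proof.
case=> x [y [z [Hg Hf]]].
by rewrite interchange ?comp_idl; try wt_auto.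
Qed.

Lemma scale0 f m n : wt f m n -> eqv (Scale 0 f) (Zero m n).
Proof.
move=> Hf; have H0 : wt (Scale 0 f) m n by constructor.
have E : eqv (Scale 0 f) (Add (Scale 0 f) (Scale 0 f)).
  by rewrite -{1}(addr0 (0 : K)%R); apply: eqv_scale_addl Hf.
symmetry; rewrite -(eqv_add_opp H0) {1}E (eqv_add_assoc H0 H0); last by constructor.
by rewrite (eqv_add_opp H0) (eqv_add_zero H0).
Qed.

(* [f] is zero, stated without naming its hom-space, so that the closure
   properties below need no typing of the ambient morphism. *)
Definition null f := eqv f (Scale 0 f).

Instance null_proper : Proper (eqv ==> iff) null.
Proof. by move=> f g E; rewrite /null E. Qed.

Lemma null_Zero m n : null (Zero m n).
Proof. by rewrite /null (scale0 (wt_zero _ m n)). Qed.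

Lemma null_eqv_Zero f m n : wt f m n -> null f -> eqv f (Zero m n).
Proof. by move=> Hf ->; apply: scale0 Hf. Qed.

Lemma null_compl f g : null g -> (exists a b d, wt f a b /\ wt g b d) -> null (Comp g f).
Proof. by rewrite /null => E Ht; rewrite {1}E comp_scalel. Qed.

Lemma null_tensl f g : null f -> typable f -> typable g -> null (Tens f g).
Proof. by rewrite /null => E Hf Hg; rewrite {1}E tens_scalel. Qed.

Lemma null_tensr f g : null g -> typable f -> typable g -> null (Tens f g).
Proof. by rewrite /null => E Hf Hg; rewrite {1}E tens_scaler. Qed.

Lemma null_add f g : null f -> null g -> (exists m n, wt f m n /\ wt g m n) -> null (Add f g).
Proof. by rewrite /null => Ef Eg H; rewrite {1}Ef {1}Eg scale_addr. Qed.

Lemma null_scale c f : null f -> typable f -> null (Scale c f).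
Proof. by rewrite /null => E H; rewrite {1}E !scale_scale ?mulr0 ?mul0r. Qed.

Lemma null_subrr f m n : wt f m n -> null (Add f (Scale (-1) f)).
Proof. by move=> Hf; rewrite (eqv_add_opp Hf); exact: null_Zero. Qed.

Lemma null_addKr f u m n : wt f m n -> wt u m n -> null u ->
  null (Add (Add f u) (Scale (-1) f)).
Proof.
move=> Hf Hu Nu.
rewrite (eqv_add_comm Hf Hu) (eqv_add_assoc Hu Hf); last by constructor.
by rewrite (eqv_add_opp Hf) (eqv_add_zero Hu).
Qed.

Lemma null_zigzag1 f : (exists a, wt f a 1) ->
  null (Comp (Comp (Tens (Id 1) Cap) (Tens Cup (Id 1))) f).
Proof.
case=> a Hf; rewrite (eqv_zigzag1 K); apply: null_compl; [exact: null_Zero | wt_auto].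
Qed.

Lemma null_zigzag2 f : (exists a, wt f a 1) ->
  null (Comp (Comp (Tens Cap (Id 1)) (Tens (Id 1) Cup)) f).
Proof.
case=> a Hf; rewrite (eqv_zigzag2 K); apply: null_compl; [exact: null_Zero | wt_auto].
Qed.

(** * Annihilation by caps *)

Section CapAnnihilation.
Variable J : nat -> tm.
Hypothesis wt_J : forall n, wt (J n) n n.
Hypothesis J0 : eqv (J 0) (Id 0).
Hypothesis J1 : eqv (J 1) (Id 1).
Hypothesis J_rec : forall n,
  eqv (J n.+2) (Add (Tens (Id 1) (J n.+1)) (Scale (-1) (Tens U (J n)))).

Lemma null_cap0_J m : null (Comp (Tens Cap (Id m)) (J m.+2)).
Proof.
rewrite J_rec comp_addr ?comp_scaler; try wt_auto.
have capU : eqv (Comp (Tens Cap (Id m)) (Tens U (J m))) (Tens Cap (J m)).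
  rewrite interchange ?comp_idl; try wt_auto.
  by rewrite -compA ?(eqv_loop K) ?comp_idl; try wt_auto.
rewrite capU; case: m capU => [|m] _.
  rewrite J1 tens_id (comp_idr (f := Tens Cap (Id 0))) ?J0; try wt_auto.
  apply: null_subrr; wt_close.
rewrite J_rec tens_addr ?tens_scaler ?comp_addr ?comp_scaler; try wt_auto.
rewrite -(@tensA (Id 1) (Id 1) (J m.+1)) ?tens_id; try wt_auto.
rewrite (@interchange Cap (Id 2) (Id m.+1) (J m.+1)) ?comp_idr ?comp_idl; try wt_auto.
apply: null_addKr; try wt_close.
apply: null_scale; last by wt_auto.
rewrite -(tens_id 1 m) -(@tensA Cap (Id 1) (Id m)) -?(@tensA (Id 1) U (J m)); try wt_auto.
rewrite interchange; try wt_auto.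
apply: null_tensl; try wt_auto.
rewrite tens_compl -?compA; try wt_auto.
apply: null_zigzag2; wt_auto.
Qed.

Lemma null_cap1_J m : null (Comp (Tens (Id 1) (Tens Cap (Id m))) (J m.+3)).
Proof.
rewrite J_rec comp_addr ?comp_scaler; try wt_auto.
apply: null_add; last by wt_auto.
  rewrite interchange; try wt_auto.
  by apply: null_tensr; [exact: null_cap0_J | wt_auto | wt_auto].
apply: null_scale; last by wt_auto.
have splitU : eqv (Tens U (J m.+1)) (Comp (Tens U (Id m.+1)) (Tens (Id 2) (J m.+1))).
  by rewrite interchange ?comp_idl ?comp_idr; try wt_auto.
rewrite splitU -(@tensA (Id 1) Cap (Id m)); try wt_auto.
rewrite -(tens_id 1 m) -(@tensA U (Id 1) (Id m)); try wt_auto.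
rewrite -compA; try wt_auto.
apply: null_compl; last by wt_auto.
rewrite interchange; try wt_auto.
apply: null_tensl; try wt_auto.
rewrite tens_compr -?compA; try wt_auto.
apply: null_zigzag1; wt_auto.
Qed.

Lemma null_capJ k m : null (Comp (Tens (Id k) (Tens Cap (Id m))) (J (k + m).+2)).
Proof.
elim: k {-2}k (leqnn k) m => [|k IH] [|[|k']] // le_k m.
- by rewrite tens_id0l; [exact: null_cap0_J | wt_auto].
- by rewrite tens_id0l; [exact: null_cap0_J | wt_auto].
- exact: null_cap1_J.
rewrite J_rec comp_addr ?comp_scaler; try wt_auto.
apply: null_add; last by wt_auto.
  rewrite -(tens_id 1 k'.+1) (@tensA (Id 1) (Id k'.+1)) ?interchange; try wt_auto.
  apply: null_tensr; try wt_auto; exact: IH.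
apply: null_scale; last by wt_auto.
rewrite -(tens_id 2 k') (@tensA (Id 2) (Id k')) ?interchange; try wt_auto.
apply: null_tensr; try wt_auto; apply: IH; lia.
Qed.

Lemma cap_J_Zero k m n : n = (k + 2 + m)%N ->
  eqv (Comp (Tens (Tens (Id k) Cap) (Id m)) (J n)) (Zero n (k + m)).
Proof.
move=> ->; apply: null_eqv_Zero; first by wt_close.
rewrite tensA; try wt_auto.
rewrite (_ : (k + 2 + m = (k + m).+2)%N); last by lia.
exact: null_capJ.
Qed.

End CapAnnihilation.

Definition sum n (l : seq tm) := foldr (@Add K) (Zero n n) l.

Section Sums.
Variables (T : eqType) (G : T -> tm) (n : nat).

Lemma wt_sum l : {in l, forall x, wt (G x) n n} -> wt (sum n (map G l)) n n.
Proof.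
elim: l => [|x l IH] Hl /=; first exact: wt_zero.
apply: wt_add; first by apply: Hl; rewrite inE eqxx.
by apply: IH => y Hy; apply: Hl; rewrite inE Hy orbT.
Qed.

Lemma sum_cat l1 l2 : {in l1 ++ l2, forall x, wt (G x) n n} ->
  eqv (sum n (map G (l1 ++ l2))) (Add (sum n (map G l1)) (sum n (map G l2))).
Proof.
elim: l1 => [|x l1 IH] Hl /=.
  have H2 := wt_sum Hl.
  by symmetry; rewrite (eqv_add_comm (wt_zero _ n n) H2); exact: eqv_add_zero H2.
have Hx : wt (G x) n n by apply: Hl; rewrite inE eqxx.
have Hl' : {in l1 ++ l2, forall x, wt (G x) n n}.
  by move=> y Hy; apply: Hl; rewrite inE Hy orbT.
rewrite IH //; symmetry; apply: (eqv_add_assoc Hx); apply: wt_sum => y Hy;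
  by apply: Hl'; rewrite mem_cat Hy ?orbT.
Qed.

Lemma sum_rem x l : x \in l -> {in l, forall x, wt (G x) n n} ->
  eqv (sum n (map G l)) (Add (G x) (sum n (map G (rem x l)))).
Proof.
elim: l => [|y l IH] //= Hx Hl.
case: eqP => [->|ne] //.
have Hy : wt (G y) n n by apply: Hl; rewrite inE eqxx.
have Hl' : {in l, forall x, wt (G x) n n} by move=> z Hz; apply: Hl; rewrite inE Hz orbT.
have Hx' : x \in l by move: Hx; rewrite inE; case: eqP => // E; case: ne.
have Hxx : wt (G x) n n by apply: Hl'.
have Hr : wt (sum n (map G (rem x l))) n n.
  by apply: wt_sum => z Hz; apply: Hl'; apply: mem_rem Hz.
rewrite /= IH // -(eqv_add_assoc Hy Hxx Hr) (eqv_add_comm Hy Hxx).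
by rewrite (eqv_add_assoc Hxx Hy Hr).
Qed.

Lemma sum_perm l1 l2 : {in l2, forall x, wt (G x) n n} -> perm_eq l1 l2 ->
  eqv (sum n (map G l1)) (sum n (map G l2)).
Proof.
elim: l1 l2 => [|x l1 IH] l2 Hl2 Hp.
  by case: l2 Hp Hl2 => // y l2 /perm_size.
have Hx : x \in l2 by rewrite -(perm_mem Hp) inE eqxx.
rewrite (sum_rem Hx Hl2) /=; apply: eqv_add => //.
apply: IH; first by move=> z Hz; apply: Hl2; apply: mem_rem Hz.
by rewrite -(perm_cons x); apply: perm_trans Hp (perm_to_rem Hx).
Qed.

Lemma eq_sum (H : T -> tm) l : (forall x, eqv (G x) (H x)) ->
  eqv (sum n (map G l)) (sum n (map H l)).
Proof. by move=> E; elim: l => [|x l IH] //=; apply: eqv_add. Qed.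

Lemma tens_sumr f a l : wt f a a -> {in l, forall x, wt (G x) n n} ->
  eqv (Tens f (sum n (map G l))) (sum (a + n) (map (fun x => Tens f (G x)) l)).
Proof.
move=> Hf; elim: l => [|x l IH] Hl /=.
  apply: null_eqv_Zero; first by apply: wt_tens Hf (wt_zero _ _ _).
  by apply: null_tensr; [exact: null_Zero | exists a, a | exists n, n; apply: wt_zero].
have Hx : wt (G x) n n by apply: Hl; rewrite inE eqxx.
have Hl' : {in l, forall x, wt (G x) n n} by move=> z Hz; apply: Hl; rewrite inE Hz orbT.
rewrite tens_addr; first by apply: eqv_add => //; exact: IH.
  by exists a, a.
by exists n, n; split=> //; apply: wt_sum.
Qed.

Lemma scale_sum c l : {in l, forall x, wt (G x) n n} ->
  eqv (Scale c (sum n (map G l))) (sum n (map (fun x => Scale c (G x)) l)).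
Proof.
elim: l => [|x l IH] Hl /=.
  apply: null_eqv_Zero; first by apply: wt_scale; apply: wt_zero.
  by apply: null_scale; [exact: null_Zero | exists n, n; apply: wt_zero].
have Hx : wt (G x) n n by apply: Hl; rewrite inE eqxx.
have Hl' : {in l, forall x, wt (G x) n n} by move=> z Hz; apply: Hl; rewrite inE Hz orbT.
rewrite scale_addr; first by apply: eqv_add => //; exact: IH.
by exists n, n; split=> //; apply: wt_sum.
Qed.

End Sums.

(** * j_n as a sum over apt sequences *)

(* A [true] at position j puts [g] on strands j+1, j+2 and skips the next
   entry; as in [gens_from], a trailing [true] is read as a through-strand. *)
Fixpoint layer (g : tm) (s : seq bool) : tm :=
  match s with
  | [::] => Id 0
  | false :: s' => Tens (Id 1) (layer g s')
  | true :: s' => if s' is _ :: s'' then Tens g (layer g s'') else Id 1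
  end.

Fixpoint layer_out (s : seq bool) : nat :=
  match s with
  | [::] => 0
  | false :: s' => (layer_out s').+1
  | true :: s' => if s' is _ :: s'' then layer_out s'' else 1
  end.

Definition jterm (s : seq bool) : tm :=
  Scale ((-1) ^+ count id s)%R (Comp (layer Cup s) (layer Cap s)).

Lemma seq_ind2 (P : seq bool -> Type) : P [::] -> (forall b, P [:: b]) ->
  (forall b c s, P s -> P (c :: s) -> P (b :: c :: s)) -> forall s, P s.
Proof.
move=> P0 P1 P2 s; suff: (P s * forall b, P (b :: s))%type by case.
by elim: s => [|c s [IH1 IH2]]; split=> // b; apply: P2.
Qed.

Lemma wt_layer_cap s : wt (layer Cap s) (size s) (layer_out s).
Proof.
elim/seq_ind2: s => [|[]|[] c s IH1 IH2]; try exact: wt_id.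
- exact: (wt_tens (wt_id _ 1) (wt_id _ 0)).
- exact: wt_cast (wt_tens (wt_cap K) IH1) _ _.
- exact: wt_cast (wt_tens (wt_id _ 1) IH2) _ _.
Qed.

Lemma wt_layer_cup s : wt (layer Cup s) (layer_out s) (size s).
Proof.
elim/seq_ind2: s => [|[]|[] c s IH1 IH2]; try exact: wt_id.
- exact: (wt_tens (wt_id _ 1) (wt_id _ 0)).
- exact: wt_cast (wt_tens (wt_cup K) IH1) _ _.
- exact: wt_cast (wt_tens (wt_id _ 1) IH2) _ _.
Qed.

Lemma wt_jterm s : wt (jterm s) (size s) (size s).
Proof. exact/wt_scale/(wt_comp (wt_layer_cap s) (wt_layer_cup s)). Qed.

Hint Resolve wt_layer_cap wt_layer_cup wt_jterm : wt_db.

Lemma jterm_false s : eqv (jterm (false :: s)) (Tens (Id 1) (jterm s)).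
Proof.
by rewrite /jterm /= add0n interchange ?comp_idl ?tens_scaler; try wt_auto.
Qed.

Lemma jterm_true_false s :
  eqv (jterm [:: true, false & s]) (Scale (-1) (Tens U (jterm s))).
Proof.
by rewrite /jterm /= add0n add1n exprS -scale_scale ?interchange ?tens_scaler; try wt_auto.
Qed.

Fixpoint apt_seqs n : seq (seq bool) :=
  match n with
  | 0 => [:: [::]]
  | 1 => [:: [:: false]]
  | (m.+1 as n').+1 =>
      map (cons false) (apt_seqs n') ++ map (fun s => [:: true, false & s]) (apt_seqs m)
  end.

Lemma apt_seqsSS n : apt_seqs n.+2 =
  map (cons false) (apt_seqs n.+1) ++ map (fun s => [:: true, false & s]) (apt_seqs n).
Proof. by []. Qed.

Lemma size_apt_seqs n s : s \in apt_seqs n -> size s = n.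
Proof.
elim: n {-2}n (leqnn n) s => [|N IH] [|[|n]] // le_n s; try by rewrite inE => /eqP ->.
rewrite apt_seqsSS mem_cat => /orP [] /mapP [t Ht ->] /=.
  by rewrite (IH n.+1).
by rewrite (IH n) //; exact: ltnW.
Qed.

Lemma wt_jterm_apt n : {in apt_seqs n, forall s, wt (jterm s) n n}.
Proof. by move=> s /size_apt_seqs <-; exact: wt_jterm. Qed.

Definition jsum n := sum n (map jterm (apt_seqs n)).

Lemma wt_jsum n : wt (jsum n) n n.
Proof. exact: wt_sum (@wt_jterm_apt n). Qed.

Lemma jsum_rec n :
  eqv (jsum n.+2) (Add (Tens (Id 1) (jsum n.+1)) (Scale (-1) (Tens U (jsum n)))).
Proof.
have wt_n1 := @wt_jterm_apt n.+1; have wt_n := @wt_jterm_apt n.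
rewrite /jsum apt_seqsSS sum_cat; last first.
  move=> s; rewrite mem_cat => /orP [] /mapP [t Ht ->];
    by apply: wt_cast (wt_jterm _) _ _; rewrite //= (size_apt_seqs Ht).
apply: eqv_add.
  rewrite (@tens_sumr _ jterm _ (Id 1) 1) //; last exact: wt_id.
  by rewrite -map_comp; apply: eq_sum => s; exact: jterm_false.
rewrite (@tens_sumr _ jterm _ U 2) //; last by wt_close.
rewrite scale_sum; last by move=> s Hs; apply: wt_tens; [wt_close | exact: wt_n].
by rewrite -map_comp; apply: eq_sum => s; exact: jterm_true_false.
Qed.

Lemma jsum0 : eqv (jsum 0) (Id 0).
Proof.
by rewrite /jsum /= (eqv_add_zero (wt_jterm [::])) /jterm /= expr0 scale_one ?comp_idl;
  try wt_auto.
Qed.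

Lemma jsum1 : eqv (jsum 1) (Id 1).
Proof.
rewrite /jsum /= (eqv_add_zero (wt_jterm [:: false])) jterm_false.
by rewrite /jterm /= expr0 scale_one ?comp_idl ?tens_id; try wt_auto.
Qed.

(** * From apt sets to apt sequences *)

Lemma gens_fromSS g P k l : gens_from g P k l.+2 =
  if P k then Tens g (gens_from g P (k + 2) l) else Tens (Id 1) (gens_from g P (k + 1) l.+1).
Proof. by []. Qed.

Lemma gens_from_layer g s k P :
  (forall j, j < size s -> P (k + j) = nth false s j) ->
  gens_from g P k (size s) = layer g s.
Proof.
elim/seq_ind2: s k => [|b|b c s IH1 IH2] k HP //.
  by have := HP 0 isT; rewrite addn0 /= => ->; case: b {HP}.
have Pk := HP 0 isT; rewrite addn0 /= in Pk.
rewrite [size _]/= gens_fromSS Pk; case: b {Pk} HP => HP.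
  by rewrite IH1 // => j Hj; have /= <- := HP j.+2 Hj; congr P; lia.
by rewrite (IH2 (k + 1)) // => j Hj; have /= <- := HP j.+1 Hj; congr P; lia.
Qed.

Fixpoint apt_seq (s : seq bool) : bool :=
  match s with
  | [::] => true
  | false :: s' => apt_seq s'
  | true :: false :: s'' => apt_seq s''
  | true :: _ => false
  end.

Lemma apt_seqP s :
  reflect (forall j, nth false s j -> (j.+1 < size s) && ~~ nth false s j.+1) (apt_seq s).
Proof.
elim/seq_ind2: s => [|b|b c s IH1 IH2].
- by apply: ReflectT => j; rewrite nth_nil.
- case: b; first by apply: ReflectF => /(_ 0 isT).
  by apply: ReflectT => -[|j]; rewrite //= nth_nil.
case: b; last first.
  apply: (iffP IH2) => H; first by case=> [|j] //= /H.
  by move=> j /(H j.+1).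
case: c {IH2}; first by apply: ReflectF => /(_ 0 isT).
apply: (iffP IH1) => H; first by case=> [|[|j]] //= /H.
by move=> j /(H j.+2).
Qed.

Lemma mem_apt_seqs n s : (s \in apt_seqs n) = (size s == n) && apt_seq s.
Proof.
elim: n {-2}n (leqnn n) s => [|N IH] [|[|n]] // le_n s; try by case: s => [|[] [|? ?]].
have cons_inj : injective (cons false) by move=> x y [].
have true_false_inj : injective (fun s => [:: true, false & s]) by move=> x y [].
rewrite apt_seqsSS mem_cat; case: s => [|[] s].
- by apply/negbTE/negP => /orP [] /mapP [].
- have /negbTE -> : true :: s \notin map (cons false) (apt_seqs n.+1) by apply/mapP => -[].
  case: s => [|[] s]; try by rewrite andbF; apply/negbTE/mapP => -[].
  by rewrite (mem_map true_false_inj) IH //; lia.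
- have /negbTE -> : false :: s \notin map (fun s => [:: true, false & s]) (apt_seqs n)
    by apply/mapP => -[].
  by rewrite orbF (mem_map cons_inj) IH.
Qed.

Lemma uniq_apt_seqs n : uniq (apt_seqs n).
Proof.
elim: n {-2}n (leqnn n) => [|N IH] [|[|n]] // le_n.
have cons_inj : injective (cons false) by move=> x y [].
have true_false_inj : injective (fun s => [:: true, false & s]) by move=> x y [].
rewrite apt_seqsSS cat_uniq !map_inj_uniq // !IH ?andbT //; try lia.
by apply/hasP => -[s /mapP [t _ ->] /mapP [u _]].
Qed.

Section SetsAsSequences.
Variable n : nat.

Definition seq_of_set (I : {set 'I_n}) : seq bool := map (inI I) (iota 0 n).

Lemma inI_ord (I : {set 'I_n}) (i : 'I_n) : inI I i = (i \in I).
Proof.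
apply/existsP/idP => [[x /andP [xI /eqP E]]|iI]; last by exists i; rewrite iI eqxx.
by rewrite (_ : i = x) //; apply: val_inj.
Qed.

Lemma size_seq_of_set I : size (seq_of_set I) = n.
Proof. by rewrite size_map size_iota. Qed.

Lemma nth_seq_of_set I j : nth false (seq_of_set I) j = inI I j.
Proof.
case: (ltnP j n) => Hj; first by rewrite (nth_map 0) ?size_iota // nth_iota.
rewrite nth_default ?size_seq_of_set //; symmetry.
by apply/existsP => -[i /andP [_ /eqP E]]; have := ltn_ord i; lia.
Qed.

Lemma count_seq_of_set I : count id (seq_of_set I) = #|I|.
Proof.
rewrite count_map -val_enum_ord count_map (eq_count (a2 := mem I)) => [|i /=].
  by rewrite enumT cardE /enum_mem size_filter.
by rewrite inI_ord.
Qed.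

Lemma seq_of_set_inj : injective seq_of_set.
Proof.
move=> I J E; apply/setP => i.
by have := congr1 (nth false ^~ i) E; rewrite /= !nth_seq_of_set !inI_ord.
Qed.

Lemma apt_seq_of_set I : apt I = apt_seq (seq_of_set I).
Proof.
apply/andP/apt_seqP => [[/forallP inI_lt /forallP inI_gap] j|H].
  rewrite !nth_seq_of_set size_seq_of_set => /existsP [i /andP [iI /eqP <-]].
  rewrite (implyP (inI_lt i) iI); apply/existsP => -[i' /andP [i'I /eqP E]].
  by move: (implyP (forallP (inI_gap i) i')); rewrite iI i'I E eqxx => /(_ isT).
split; apply/forallP => i.
  apply/implyP => iI.
  by have := H i; rewrite nth_seq_of_set inI_ord iI size_seq_of_set => /(_ isT) /andP [].
apply/forallP => j; apply/implyP => /andP [iI jI]; apply/eqP => E.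
have := H i; rewrite !nth_seq_of_set inI_ord iI -E inI_ord jI.
by move=> /(_ isT) /andP [].
Qed.

Lemma perm_apt_sets : perm_eq (map seq_of_set (enum [pred I : {set 'I_n} | apt I])) (apt_seqs n).
Proof.
apply: uniq_perm; first by rewrite map_inj_uniq ?enum_uniq //; exact: seq_of_set_inj.
  exact: uniq_apt_seqs.
move=> s; rewrite mem_apt_seqs; apply/mapP/andP => [[I] | [/eqP Hs Hb]].
  by rewrite mem_enum => aptI ->; rewrite size_seq_of_set -apt_seq_of_set.
have sE : seq_of_set [set i : 'I_n | nth false s i] = s.
  apply: (eq_from_nth (x0 := false)); rewrite size_seq_of_set // => j Hj.
  by rewrite nth_seq_of_set (inI_ord _ (Ordinal Hj)) inE.
by exists [set i : 'I_n | nth false s i]; rewrite // mem_enum inE apt_seq_of_set sE.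
Qed.

Lemma jn_jsum : eqv (jn K n) (jsum n).
Proof.
have layerE g I : gens_from g (inI I) 0 n = layer g (seq_of_set I).
  by rewrite -(gens_from_layer g (k := 0) (P := inI I)) ?size_seq_of_set // => j _;
    rewrite nth_seq_of_set.
have -> : jn K n = sum n (map jterm (map seq_of_set (enum [pred I : {set 'I_n} | apt I]))).
  rewrite /jn /sum !foldr_map; elim: (enum _) => //= I l ->.
  by rewrite /jterm count_seq_of_set /cupI /capI !layerE.
exact: sum_perm (@wt_jterm_apt n) perm_apt_sets.
Qed.

End SetsAsSequences.

(** * Vertical reflection *)

Fixpoint mirror (f : tm) : tm :=
  match f with
  | Defs.Id n => Id n
  | Defs.Cup => Cap
  | Defs.Cap => Cup
  | Comp f g => Comp (mirror g) (mirror f)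
  | Tens f g => Tens (mirror f) (mirror g)
  | Defs.Zero m n => Zero n m
  | Add f g => Add (mirror f) (mirror g)
  | Scale c f => Scale c (mirror f)
  end.

Lemma wt_mirror f a b : wt f a b -> wt (mirror f) b a.
Proof. by elim=> /=; intros; econstructor; eauto. Qed.

Lemma eqv_mirror f g : eqv f g -> eqv (mirror f) (mirror g).
Proof.
elim=> /=; intros; first
  [ by econstructor; eauto using wt_mirror
  | by symmetry; econstructor; eauto using wt_mirror
  | by apply: eqv_trans; eauto
  | exact: eqv_zigzag2 | exact: eqv_zigzag1 ].
Qed.

Lemma mirror_layer s : mirror (layer Cap s) = layer Cup s /\ mirror (layer Cup s) = layer Cap s.
Proof.
elim/seq_ind2: s => [|[]|[] c s [IH1 IH1'] [IH2 IH2']] //=; first by rewrite IH1 IH1'.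
by move: IH2 IH2' => /= -> ->.
Qed.

Lemma mirror_jsum n : mirror (jsum n) = jsum n.
Proof.
rewrite /jsum /sum; elim: (apt_seqs n) => //= s l ->.
by rewrite /jterm /= (proj1 (mirror_layer s)) (proj2 (mirror_layer s)).
Qed.

End TL0.

Theorem mainTheorem6 (K : fieldType) (n i : nat) :
  (1 <= n)%N -> (1 <= i)%N -> (i <= n - 1)%N ->
  eqv (Comp (cap1 K n i) (jn K n)) (Zero K n (n - 2)) /\
  eqv (Comp (jn K n) (cup1 K n i)) (Zero K (n - 2) n).
Proof.
move=> n_ge1 i_ge1 i_le.
have cap_jsum : eqv (Comp (cap1 K n i) (jsum K n)) (Zero K n (n - 2)).
  rewrite /cap1 (_ : (n - 2 = i - 1 + (n - i - 1))%N); last by lia.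
  apply: cap_J_Zero; [exact: wt_jsum | exact: jsum0 | exact: jsum1 | exact: jsum_rec | lia].
split; first by rewrite jn_jsum.
have := eqv_mirror cap_jsum; rewrite [mirror _]/= mirror_jsum.
by rewrite jn_jsum.
Qed.
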